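(* In the setting of finite contexts $\mathcal Z=\{z_1,\dots,z_m\}$ with distribution $p$ and a finite trajectory set $\mathcal T$, assume that for every $z\in\mathcal Z$ the map $\tau\mapsto u(\tau,z)$ is injective on $\mathcal T$, and that the set $X_{\mathrm{ics}}$ of inconsistent pairs is nonempty. Fix $k$. If $$p(z_k)>\max_{(\tau,\tau')\in X_{\mathrm{ics}}}\frac{1+\max_i N(\tau,\tau',z_i)}{2+N(\tau,\tau',z_k)+\max_i N(\tau,\tau',z_i)},$$ then for all $\tau^1,\tau^2\in\mathcal T$ with $u(\tau^1,z_k)>u(\tau^2,z_k)$ we have $BC_p(\tau^1)>BC_p(\tau^2)$, hence $\hat u(\tau^1)>\hat u(\tau^2)$; consequently $\hat u(\tau^1)>\hat u(\tau^2)\iff u(\tau^1,z_k)>u(\tau^2,z_k)$ for all $\tau^1,\tau^2\in\mathcal T$.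
   Context: A pair $(\tau^1,\tau^2)$ is consistent if $u(\tau^1,z)\ge u(\tau^2,z)$ for all $z$ or $u(\tau^1,z)\le u(\tau^2,z)$ for all $z$; otherwise inconsistent. $N(\tau^1,\tau^2,z)=\sum_{\tau\in\mathcal T}\big(\mathbb I\{u(\tau^1,z)>u(\tau,z)>u(\tau^2,z)\}+\mathbb I\{u(\tau^1,z)<u(\tau,z)<u(\tau^2,z)\}\big)$. $O_u(a,b,z)=\tfrac12$ if $u(a,z)=u(b,z)$, $1$ if $u(a,z)>u(b,z)$, $0$ otherwise. $BC_p(a)=\frac{1}{|\mathcal T|}\sum_{b\in\mathcal T}\mathbb E_{z\sim p}[O_u(a,b,z)]$. The learned utility $\hat u:\mathcal T\to\mathbb R$ satisfies $\hat u(a)>\hat u(b)\iff BC_p(a)>BC_p(b)$. *)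

From mathcomp Require Import all_boot all_order all_algebra.
Set Implicit Arguments. Unset Strict Implicit. Unset Printing Implicit Defensive.
Import Order.TTheory GRing.Theory Num.Theory.
Local Open Scope ring_scope.

Section Defs.
Variables (R : realFieldType) (T Z : finType).

Definition is_distribution (p : Z -> R) : Prop :=
  (forall z, 0 <= p z) /\ \sum_(z : Z) p z = 1.

Definition consistent (u : T -> Z -> R) (t1 t2 : T) : Prop :=
  (forall z, u t1 z >= u t2 z) \/ (forall z, u t1 z <= u t2 z).

Definition inconsistent (u : T -> Z -> R) (t1 t2 : T) : Prop :=
  ~ consistent u t1 t2.

Definition Ncount (u : T -> Z -> R) (t1 t2 : T) (z : Z) : nat :=
  \sum_(t : T) addn ((u t z < u t1 z)%R && (u t2 z < u t z)%R)
                    ((u t1 z < u t z)%R && (u t z < u t2 z)%R).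

Definition maxN (u : T -> Z -> R) (t1 t2 : T) : nat :=
  \max_(i : Z) Ncount u t1 t2 i.

Definition Ou (u : T -> Z -> R) (a b : T) (z : Z) : R :=
  if u a z == u b z then 2^-1 else if u a z > u b z then 1 else 0.

Definition BC (u : T -> Z -> R) (p : Z -> R) (a : T) : R :=
  (#|T|%:R)^-1 * \sum_(b : T) \sum_(z : Z) p z * Ou u a b z.

End Defs.

From mathcomp Require Import all_boot all_order all_algebra.
From mathcomp Require Import ring lra.
Import Order.TTheory GRing.Theory Num.Theory.
Local Open Scope ring_scope.
Set Implicit Arguments. Unset Strict Implicit.

(* Swapping a for b changes the Borda count of a in context z by N(a,b,z) + 1
   in absolute value, with the sign of u(a,z) - u(b,z).  If the pair is
   consistent every context contributes positively.  Otherwise the context z_k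
   contributes p(z_k) (N_k + 1) and all others together lose at most
   (1 - p(z_k)) (max N + 1), and the bound on p(z_k) is exactly what makes the
   total positive. *)

Lemma distribution_weighted_sum_ge (R : realFieldType) (Z : finType)
    (p w : Z -> R) (k : Z) (c : R) :
  is_distribution p -> (forall z, z != k -> - c <= w z) ->
  p k * w k - c * (1 - p k) <= \sum_z p z * w z.
Proof.
move=> [p0 p1] wc; rewrite (bigD1 k) //= lerD2l.
have -> : 1 - p k = \sum_(z | z != k) p z by rewrite -p1 (bigD1 k) //= addrC addrK.
rewrite mulr_sumr -sumrN; apply: ler_sum => z zk.
by rewrite -mulNr mulrC ler_wpM2l ?wc.
Qed.

Section BordaCount.
Variables (R : realFieldType) (T Z : finType) (u : T -> Z -> R).
Hypothesis u_inj : forall z, injective (fun t => u t z).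

Lemma NcountC (a b : T) (z : Z) : Ncount u a b z = Ncount u b a z.
Proof. by apply: eq_bigr => t _; rewrite addnC; congr addn; rewrite andbC. Qed.

Lemma Ou_subE (a b t : T) (z : Z) : u b z < u a z ->
  Ou u a t z - Ou u b t z =
  (addn ((u t z < u a z) && (u b z < u t z)) ((u a z < u t z) && (u t z < u b z)))%:R
  + ((t == a)%:R + (t == b)%:R) / 2.
Proof.
move=> hab; rewrite /Ou.
have nab : (a == b) = false by apply/negbTE/eqP => E; move: hab; rewrite E ltxx.
have [->|ta] := eqVneq t a.
  by rewrite eqxx nab ltxx /= (lt_eqF hab) (lt_gtF hab) /=; field.
have [->|tb] := eqVneq t b.
  by rewrite eqxx (gt_eqF hab) hab ltxx /= andbF /= ?(negbTE ta); field.
have na : u t z != u a z by apply: contra ta => /eqP/u_inj ->.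
have nb : u t z != u b z by apply: contra tb => /eqP/u_inj ->.
rewrite eq_sym (negbTE na) eq_sym (negbTE nb) ?(negbTE ta) ?(negbTE tb) /=.
case: (ltgtP (u t z) (u a z)) na => // h1 _;
case: (ltgtP (u t z) (u b z)) nb => // h2 _ /=; try (by field); lra.
Qed.

Lemma sum_Ou_sub_gt (a b : T) (z : Z) : u b z < u a z ->
  \sum_t (Ou u a t z - Ou u b t z) = (Ncount u a b z)%:R + 1.
Proof.
move=> hab.
have nab : a != b by apply: contraTneq hab => ->; rewrite ltxx.
under eq_bigr do rewrite Ou_subE //.
rewrite big_split /= natr_sum -mulr_suml big_split /=; congr (_ + _).
rewrite (bigD1 a) //= eqxx big1; last by move=> i /negbTE ->.
rewrite (bigD1 b) //= eqxx big1; last by move=> i /negbTE ->.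
by rewrite !addr0; field.
Qed.

Lemma sum_Ou_sub (a b : T) (z : Z) : a != b ->
  \sum_t (Ou u a t z - Ou u b t z) =
  if u b z < u a z then (Ncount u a b z)%:R + 1 else - ((Ncount u a b z)%:R + 1).
Proof.
move=> nab.
have ne : u a z != u b z by apply: contra nab => /eqP/u_inj ->.
case: ltP => h; first exact: sum_Ou_sub_gt.
have h' : u a z < u b z by rewrite lt_neqAle ne h.
by rewrite NcountC -(sum_Ou_sub_gt h') -sumrN; apply: eq_bigr => t _; ring.
Qed.

Lemma BC_sub (p : Z -> R) (a b : T) :
  BC u p a - BC u p b = (#|T|%:R)^-1 * \sum_z p z * \sum_t (Ou u a t z - Ou u b t z).
Proof.
rewrite /BC -mulrBr [X in X - _]exchange_big [X in _ - X]exchange_big -sumrB /=.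
congr (_ * _); apply: eq_bigr => z _.
by rewrite mulr_sumr -sumrB; apply: eq_bigr => t _; rewrite mulrBr.
Qed.

Lemma inconsistent_of_crossing (a b : T) (z z' : Z) :
  u b z < u a z -> u a z' < u b z' -> inconsistent u a b.
Proof. by move=> h h' [] H; [have := H z'|have := H z]; rewrite leNgt ?h ?h'. Qed.

Lemma BC_lt_of_u_lt (p : Z -> R) (k : Z) :
  is_distribution p ->
  (forall t t', inconsistent u t t' ->
     p k > (1 + (maxN u t t')%:R) / (2 + (Ncount u t t' k)%:R + (maxN u t t')%:R)) ->
  forall t1 t2, u t2 k < u t1 k -> BC u p t2 < BC u p t1.
Proof.
move=> pdist hp t1 t2 h12; have [p0 p1] := pdist.
have n12 : t1 != t2 by apply: contraTneq h12 => ->; rewrite ltxx.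
have cT : (0 < #|T|)%N by apply/card_gt0P; exists t1.
rewrite -subr_gt0 BC_sub pmulr_rgt0 ?invr_gt0 ?ltr0n //.
under eq_bigr do rewrite sum_Ou_sub //.
have N0 z : 0 <= (Ncount u t1 t2 z)%:R :> R by rewrite ler0n.
have [z0 hz0 | agree] := pickP (fun z => u t1 z < u t2 z).
- have := hp _ _ (inconsistent_of_crossing h12 hz0).
  set M := (maxN u t1 t2)%:R; set Nk := (Ncount u t1 t2 k)%:R.
  have M0 : 0 <= M by rewrite ler0n.
  rewrite ltr_pdivrMr; last by have := N0 k; rewrite -/Nk; lra.
  move=> hpk; apply: lt_le_trans (distribution_weighted_sum_ge (k := k) (c := M + 1) pdist _).
    rewrite h12 -/Nk.
    have -> : p k * (Nk + 1) - (M + 1) * (1 - p k) = p k * (2 + Nk + M) - (1 + M).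
      by ring.
    by rewrite subr_gt0.
  move=> z _ {hpk}; have NM : (Ncount u t1 t2 z)%:R <= M by rewrite ler_nat leq_bigmax.
  by have := N0 z; case: ifP => _; lra.
- apply: lt_le_trans ltr01 _; rewrite -{1}p1; apply: ler_sum => z _.
  have hz : u t2 z < u t1 z.
    rewrite lt_neqAle leNgt agree andbT; apply: contra n12 => /eqP E.
    by rewrite (u_inj E).
  by rewrite hz -{1}(mulr1 (p z)) ler_wpM2l //; have := N0 z; lra.
Qed.

End BordaCount.

Unset Implicit Arguments.

Theorem mainTheorem4 (R : realFieldType) (T Z : finType)
  (u : T -> Z -> R) (p : Z -> R) (uhat : T -> R) (k : Z) :
  is_distribution p ->
  (forall z, injective (fun t => u t z)) ->
  (exists t t', inconsistent u t t') ->
  (forall a b, uhat a > uhat b <-> BC u p a > BC u p b) ->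
  (forall t t', inconsistent u t t' ->
     p k > (1 + (maxN u t t')%:R) / (2 + (Ncount u t t' k)%:R + (maxN u t t')%:R)) ->
  (forall t1 t2, u t1 k > u t2 k -> BC u p t1 > BC u p t2 /\ uhat t1 > uhat t2) /\
  (forall t1 t2, uhat t1 > uhat t2 <-> u t1 k > u t2 k).
Proof.
move=> pdist u_inj _ uhatE hp.
have BC_mono := BC_lt_of_u_lt u_inj pdist hp.
split=> [t1 t2 h | t1 t2]; first by split; [|apply/uhatE]; exact: BC_mono.
split=> [/uhatE hb | h]; last exact/uhatE/BC_mono.
case: (ltgtP (u t1 k) (u t2 k)) => // h.
- by have := BC_mono _ _ h; rewrite ltNge (ltW hb).
- by move: hb; rewrite (u_inj _ _ _ h) ltxx.
Qed.
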